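(* Let $\nu_1,\nu_2>0$ and $\alpha,\beta\ge 0$ be real numbers. Let $X$ and $Y$ be independent random variables with values in $\mathbb{N}=\{0,1,2,\dots\}$ such that $P(X=x)=f(x)>0$ and $P(Y=y)=g(y)>0$ for all $x,y\in\mathbb{N}$. Suppose that for every $s\in\mathbb{N}$, the conditional distribution of $X$ given $X+Y=s$ is the extended negative hypergeometric distribution $\mathrm{ENHG}(s,\nu_1,\nu_2,\alpha,\beta)$, i.e. $$P(X=k\mid X+Y=s)=\frac{\{\Gamma(\nu_1+k)\Gamma(\nu_2+s-k)\}^\beta}{[k!(s-k)!]^\alpha}\Big/ E(s,\nu_1,\nu_2,\alpha,\beta),\qquad k=0,1,\dots,s,$$ where $E(s,\nu_1,\nu_2,\alpha,\beta)=\sum_{x=0}^s \frac{\{\Gamma(\nu_1+x)\Gamma(\nu_2+s-x)\}^\beta}{[x!(s-x)!]^\alpha}$. Then there exists $p>0$ such that $X\sim \mathrm{ECOMP}(\nu_1,p,\alpha,\beta)$ and $Y\sim\mathrm{ECOMP}(\nu_2,p,\alpha,\beta)$, i.e. $$P(X=x)=P(X=0)\frac{[\Gamma(\nu_1+x)]^\beta}{[\Gamma(\nu_1)]^\beta (x!)^\alpha}p^x,\qquad P(Y=y)=P(Y=0)\frac{[\Gamma(\nu_2+y)]^\beta}{[\Gamma(\nu_2)]^\beta (y!)^\alpha}p^y$$ for all $x,y\in\mathbb{N}$.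
   Context: A random variable $X$ follows the extended COM-Poisson distribution $\mathrm{ECOMP}(\nu,p,\alpha,\beta)$ if $$P(X=k)=\frac{[\Gamma(\nu+k)]^\beta}{[\Gamma(\nu)]^\beta (k!)^\alpha}\,p^k\cdot\frac{1}{S(\nu,p,\alpha,\beta)},\qquad k=0,1,2,\dots,$$ where $S(\nu,p,\alpha,\beta)=\sum_{k=0}^\infty \frac{[\Gamma(\nu+k)]^\beta}{[\Gamma(\nu)]^\beta (k!)^\alpha}p^k$ is the (finite) normalizing constant; the parameter space is $(\nu\ge0,p>0,\alpha>\beta\ge0)\cup(\nu>0,0<p<1,\alpha=\beta\ge0)$. *)

From Stdlib Require Import Reals Factorial.
From Coquelicot Require Import Coquelicot.
Open Scope R_scope.

Definition Gamma (x : R) : R :=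
  RInt_gen (fun t => Rpower t (x - 1) * exp (- t)) (at_right 0) (Rbar_locally p_infty).

Definition enhg_weight (s : nat) (nu1 nu2 alpha beta : R) (k : nat) : R :=
  Rpower (Gamma (nu1 + INR k) * Gamma (nu2 + INR (s - k)%nat)) beta
  / Rpower (INR (fact k) * INR (fact (s - k)%nat)) alpha.

Definition enhg_norm (s : nat) (nu1 nu2 alpha beta : R) : R :=
  sum_f_R0 (enhg_weight s nu1 nu2 alpha beta) s.

Definition enhg_pmf (s : nat) (nu1 nu2 alpha beta : R) (k : nat) : R :=
  enhg_weight s nu1 nu2 alpha beta k / enhg_norm s nu1 nu2 alpha beta.

Definition ecomp_weight (nu p alpha beta : R) (x : nat) : R :=
  Rpower (Gamma (nu + INR x)) beta
  / (Rpower (Gamma nu) beta * Rpower (INR (fact x)) alpha) * p ^ x.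

(* For independent N-valued X, Y with pmfs f, g, the conditional probability
   P(X = k | X + Y = s) = P(X=k) P(Y=s-k) / sum_{j=0}^s P(X=j) P(Y=s-j). *)
Definition cond_prob_given_sum (f g : nat -> R) (s k : nat) : R :=
  f k * g (s - k)%nat / sum_f_R0 (fun j => f j * g (s - j)%nat) s.

(* Taking k = x + 1 and k = x in the conditional law given X + Y = x + 1 shows
   f(x+1) g(0) / (f(x) g(1)) = w1(x+1) w2(0) / (w1(x) w2(1)), where the ENHG
   weights factor as w1(k) w2(s-k) with w(k) = Gamma(nu+k)^beta / (k!)^alpha.
   Hence f(x+1)/f(x) = p w1(x+1)/w1(x) with the constant p = g(1) w2(0) / (g(0) w2(1)),
   and symmetrically for g with the same p.  The factorisation of the weights
   requires Gamma(nu) > 0, i.e. positivity of an improper integral of a positive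
   function whose partial integrals are bounded. *)
From Stdlib Require Import Reals Factorial Lra Lia Classical_Pred_Type.
From Coquelicot Require Import Coquelicot.
Open Scope R_scope.

Section ImproperIntegral.

Variables (F : R -> R) (lo : R).
Hypothesis F_cont : forall t, lo < t -> continuous F t.
Hypothesis F_nonneg : forall t, lo < t -> 0 <= F t.

Lemma ex_RInt_above u v : lo < u -> u <= v -> ex_RInt F u v.
Proof.
  intros Hu Huv. apply (@ex_RInt_continuous R_CompleteNormedModule).
  intros z Hz. apply F_cont. rewrite Rmin_left in Hz by lra. lra.
Qed.

Lemma RInt_le_superinterval a b a0 b0 :
  lo < a -> a <= a0 -> a0 <= b0 -> b0 <= b -> RInt F a0 b0 <= RInt F a b.
Proof.
  intros Ha Haa0 Ha0b0 Hb0b.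
  assert (Hnonneg : forall u v, lo < u -> u <= v -> 0 <= RInt F u v).
  { intros u v Hu Huv. apply RInt_ge_0; [lra | apply ex_RInt_above; lra |].
    intros t Ht. apply F_nonneg. lra. }
  rewrite <- (RInt_Chasles F a a0 b) by (apply ex_RInt_above; lra).
  rewrite <- (RInt_Chasles F a0 b0 b) by (apply ex_RInt_above; lra).
  unfold plus; simpl.
  pose proof (Hnonneg a a0 ltac:(lra) Haa0). pose proof (Hnonneg b0 b ltac:(lra) Hb0b).
  lra.
Qed.

(* The improper integral is the supremum of the integrals over compact subintervals. *)
Lemma is_RInt_gen_of_bounded M :
  (forall a b, lo < a -> a <= b -> RInt F a b <= M) ->
  exists l, is_RInt_gen F (at_right lo) (Rbar_locally p_infty) l /\
    forall a b, lo < a -> a <= b -> RInt F a b <= l.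
Proof.
  intros HM.
  set (S := fun y => exists a b, lo < a /\ a <= b /\ y = RInt F a b).
  assert (HS : S (RInt F (lo + 1) (lo + 2))).
  { exists (lo + 1), (lo + 2). repeat split; lra. }
  assert (Hbound : bound S).
  { exists M. intros y [a [b [Ha [Hab ->]]]]. auto. }
  destruct (completeness S Hbound (ex_intro _ _ HS)) as [l [Hub Hlub]].
  assert (Hle : forall a b, lo < a -> a <= b -> RInt F a b <= l).
  { intros a b Ha Hab. apply Hub. exists a, b. auto. }
  exists l. split; [|exact Hle].
  apply (filterlimi_lim_ext_loc (fun ab : R * R => RInt F (fst ab) (snd ab))).
  - exists (fun a => lo < a < lo + 1) (fun b => lo + 1 < b).
    + exists (mkposreal 1 Rlt_0_1). intros y Hy Hlo.
      apply Rabs_def2 in Hy. unfold minus, plus, opp in Hy; simpl in Hy. lra.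
    + exists (lo + 1). auto.
    + intros a b Ha Hb. simpl.
      apply (@RInt_correct R_CompleteNormedModule), ex_RInt_above; lra.
  - apply filterlim_locally. intros eps.
    assert (Happrox : exists y, S y /\ l - eps < y).
    { apply not_all_not_ex. intros Hnone.
      assert (l <= l - eps).
      { apply Hlub. intros y Sy. destruct (Rle_dec y (l - eps)) as [Hy | Hy]; auto.
        exfalso. apply (Hnone y). split; auto; lra. }
      pose proof (cond_pos eps). lra. }
    destruct Happrox as [y [[a0 [b0 [Ha0 [Hab0 ->]]]] Hy]].
    exists (fun a => lo < a <= a0) (fun b => b0 <= b).
    + exists (mkposreal (a0 - lo) ltac:(lra)). intros z Hz Hlo.
      apply Rabs_def2 in Hz. unfold minus, plus, opp in Hz; simpl in Hz. lra.
    + exists b0. intros; lra.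
    + intros a b Ha Hb. simpl.
      pose proof (RInt_le_superinterval a b a0 b0 ltac:(lra) ltac:(lra) Hab0 Hb).
      pose proof (Hle a b ltac:(lra) ltac:(lra)).
      apply Rabs_def1; unfold minus, plus, opp; simpl; lra.
Qed.

Lemma RInt_gen_pos_of_bounded M a b :
  (forall a b, lo < a -> a <= b -> RInt F a b <= M) ->
  lo < a -> a <= b -> 0 < RInt F a b ->
  0 < RInt_gen F (at_right lo) (Rbar_locally p_infty).
Proof.
  intros HM Ha Hab Hpos.
  destruct (is_RInt_gen_of_bounded M HM) as [l [Hl Hle]].
  rewrite (is_RInt_gen_unique F l Hl).
  pose proof (Hle a b Ha Hab). lra.
Qed.

End ImproperIntegral.

Lemma ln_le_tangent N t : 0 < N -> 0 < t -> ln t <= ln N + t / N - 1.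
Proof.
  intros HN Ht.
  assert (Htn : 0 < t / N) by (apply Rdiv_lt_0_compat; lra).
  replace t with (N * (t / N)) at 1 by (field; lra).
  rewrite ln_mult by lra.
  pose proof (ln_le (t / N) (exp (t / N - 1)) Htn) as Hle.
  rewrite ln_exp in Hle. pose proof (exp_ineq1_le (t / N - 1)). lra.
Qed.

Lemma mul_ln_le_linear e : exists c, forall t, 1 <= t -> e * ln t <= c + t / 2.
Proof.
  set (N := 2 * Rabs e + 2).
  assert (HN : 0 < N) by (unfold N; pose proof (Rabs_pos e); lra).
  exists (Rabs e * Rabs (ln N - 1)). intros t Ht.
  assert (Hln : 0 <= ln t) by (rewrite <- ln_1; apply ln_le; lra).
  pose proof (ln_le_tangent N t HN ltac:(lra)) as Htan.
  assert (H1 : e * ln t <= Rabs e * ln t).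
  { apply Rmult_le_compat_r; [lra | apply Rle_abs]. }
  assert (H2 : Rabs e * ln t <= Rabs e * (ln N - 1) + Rabs e * (t / N)).
  { rewrite <- Rmult_plus_distr_l. apply Rmult_le_compat_l; [apply Rabs_pos | lra]. }
  assert (H3 : Rabs e * (ln N - 1) <= Rabs e * Rabs (ln N - 1)).
  { apply Rmult_le_compat_l; [apply Rabs_pos | apply Rle_abs]. }
  assert (H4 : Rabs e * (t / N) <= t / 2).
  { unfold Rdiv. apply Rmult_le_reg_r with N; [lra |].
    rewrite !Rmult_assoc, Rinv_l, Rmult_1_r by lra.
    unfold N. pose proof (Rabs_pos e). nra. }
  lra.
Qed.

Definition gamma_integrand (x t : R) : R := Rpower t (x - 1) * exp (- t).

Section GammaPositive.

Variable x : R.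
Hypothesis x_pos : 0 < x.

Lemma gamma_integrand_pos t : 0 < gamma_integrand x t.
Proof. apply Rmult_lt_0_compat; apply exp_pos. Qed.

Lemma gamma_integrand_continuous t : 0 < t -> continuous (gamma_integrand x) t.
Proof.
  intro Ht. unfold gamma_integrand, Rpower.
  apply (@ex_derive_continuous R_AbsRing R_NormedModule). auto_derive. lra.
Qed.

(* On (0,1] the factor exp(-t) is at most 1 and t^(x-1) has antiderivative t^x / x. *)
Lemma RInt_gamma_integrand_head a :
  0 < a -> a <= 1 -> RInt (gamma_integrand x) a 1 <= 1 / x.
Proof.
  intros Ha Ha1.
  set (P := fun t => Rpower t (x - 1)).
  assert (HP : is_RInt P a 1 (minus (Rpower 1 x / x) (Rpower a x / x))).
  { apply (@is_RInt_derive R_CompleteNormedModule (fun t => Rpower t x / x) P).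
    - intros t Ht. rewrite Rmin_left in Ht by lra. unfold P, Rpower.
      auto_derive; [lra |].
      replace ((x - 1) * ln t) with (x * ln t + - ln t) by ring.
      rewrite exp_plus, exp_Ropp, exp_ln by lra. field. split; lra.
    - intros t Ht. rewrite Rmin_left in Ht by lra. unfold P, Rpower.
      apply (@ex_derive_continuous R_AbsRing R_NormedModule). auto_derive. lra. }
  apply Rle_trans with (RInt P a 1).
  - apply RInt_le; [lra | | eexists; exact HP |].
    + apply (ex_RInt_above _ 0); [exact gamma_integrand_continuous | lra | lra].
    + intros t Ht. unfold gamma_integrand, P.
      assert (exp (- t) <= 1) by (rewrite <- exp_0; left; apply exp_increasing; lra).
      assert (0 < Rpower t (x - 1)) by apply exp_pos. nra.
  - rewrite (is_RInt_unique _ _ _ _ HP). unfold minus, plus, opp; simpl.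
    assert (Rpower 1 x = 1) by (unfold Rpower; rewrite ln_1, Rmult_0_r; apply exp_0).
    assert (0 < Rpower a x) by apply exp_pos.
    assert (0 < / x) by (apply Rinv_0_lt_compat; lra).
    unfold Rdiv. nra.
Qed.

(* On [1,oo) the integrand is dominated by exp(c) exp(-t/2). *)
Lemma RInt_gamma_integrand_tail : exists C, forall b, 1 <= b -> RInt (gamma_integrand x) 1 b <= C.
Proof.
  destruct (mul_ln_le_linear (x - 1)) as [c Hc].
  exists (2 * exp c). intros b Hb.
  set (P := fun t => exp c * exp (- t / 2)).
  assert (HP : is_RInt P 1 b
                 (minus (-2 * exp c * exp (- b / 2)) (-2 * exp c * exp (- 1 / 2)))).
  { apply (@is_RInt_derive R_CompleteNormedModule (fun t => -2 * exp c * exp (- t / 2)) P).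
    - intros t Ht. unfold P. auto_derive; [auto |].
      unfold Rdiv. generalize (exp c) (exp (- t * / 2)). intros. field.
    - intros t Ht. unfold P.
      apply (@ex_derive_continuous R_AbsRing R_NormedModule). auto_derive. auto. }
  apply Rle_trans with (RInt P 1 b).
  - apply RInt_le; [lra | | eexists; exact HP |].
    + apply (ex_RInt_above _ 0); [exact gamma_integrand_continuous | lra | lra].
    + intros t Ht. unfold gamma_integrand, P, Rpower. rewrite <- !exp_plus.
      pose proof (Hc t ltac:(lra)).
      destruct (Req_dec ((x - 1) * ln t + - t) (c + - t / 2)) as [Heq | Hneq].
      * rewrite Heq. lra.
      * left. apply exp_increasing. lra.
  - rewrite (is_RInt_unique _ _ _ _ HP). unfold minus, plus, opp; simpl.
    pose proof (exp_pos c). pose proof (exp_pos (- b / 2)).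
    assert (exp (- 1 / 2) <= 1) by (rewrite <- exp_0; left; apply exp_increasing; lra).
    pose proof (exp_pos (- 1 / 2)). nra.
Qed.

Lemma Gamma_pos : 0 < Gamma x.
Proof.
  change (0 < RInt_gen (gamma_integrand x) (at_right 0) (Rbar_locally p_infty)).
  assert (Hcont := gamma_integrand_continuous).
  assert (Hnonneg : forall t, 0 < t -> 0 <= gamma_integrand x t).
  { intros t _. left. apply gamma_integrand_pos. }
  destruct RInt_gamma_integrand_tail as [C HC].
  apply (RInt_gen_pos_of_bounded _ 0 Hcont Hnonneg (1 / x + C) 1 2); [| lra | lra |].
  - intros a b Ha Hab.
    pose proof (Rmin_l a 1). pose proof (Rmin_r a 1).
    pose proof (Rmax_l b 1). pose proof (Rmax_r b 1).
    assert (Hm : 0 < Rmin a 1) by (apply Rmin_glb_lt; lra).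
    eapply Rle_trans.
    { apply (RInt_le_superinterval _ 0 Hcont Hnonneg (Rmin a 1) (Rmax b 1)); lra. }
    rewrite <- (RInt_Chasles _ (Rmin a 1) 1 (Rmax b 1))
      by (apply (ex_RInt_above _ 0 Hcont); lra).
    pose proof (RInt_gamma_integrand_head (Rmin a 1) Hm ltac:(lra)).
    pose proof (HC (Rmax b 1) ltac:(lra)).
    unfold plus; simpl. lra.
  - apply RInt_gt_0; [lra | |].
    + intros t _. apply gamma_integrand_pos.
    + intros t Ht. apply Hcont. lra.
Qed.

End GammaPositive.

Lemma geometric_form (h a : nat -> R) (r : R) :
  (forall x, 0 < a x) ->
  (forall x, h (S x) = h x * r * (a (S x) / a x)) ->
  forall x, h x = h 0%nat * (a x / a 0%nat) * r ^ x.
Proof.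
  intros Ha Hstep x. induction x as [|x IH].
  - simpl. pose proof (Ha 0%nat). field. lra.
  - rewrite Hstep, IH. simpl. pose proof (Ha x). pose proof (Ha 0%nat). field. lra.
Qed.

Definition first_ratio (h a : nat -> R) : R := h 1%nat * a 0%nat / (h 0%nat * a 1%nat).

Section ProductForm.

Variables (f g a1 a2 c : nat -> R).
Hypotheses (f_pos : forall x, 0 < f x) (g_pos : forall y, 0 < g y)
  (a1_pos : forall x, 0 < a1 x) (a2_pos : forall y, 0 < a2 y).
Hypothesis product_form :
  forall s k, (k <= s)%nat -> f k * g (s - k)%nat = c s * (a1 k * a2 (s - k)%nat).

Lemma product_form_swap :
  forall s k, (k <= s)%nat -> g k * f (s - k)%nat = c s * (a2 k * a1 (s - k)%nat).
Proof.
  intros s k Hks. pose proof (product_form s (s - k) ltac:(lia)) as E.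
  replace (s - (s - k))%nat with k in E by lia. lra.
Qed.

(* Compare the splittings (x+1, 0) and (x, 1) of the sum x + 1. *)
Lemma product_form_succ x : f (S x) = f x * first_ratio g a2 * (a1 (S x) / a1 x).
Proof.
  pose proof (product_form (S x) (S x) (le_n _)) as E0.
  pose proof (product_form (S x) x (Nat.le_succ_diag_r _)) as E1.
  replace (S x - S x)%nat with 0%nat in E0 by lia.
  replace (S x - x)%nat with 1%nat in E1 by lia.
  unfold first_ratio.
  pose proof (g_pos 0%nat). pose proof (g_pos 1%nat).
  pose proof (a2_pos 1%nat). pose proof (a1_pos x).
  apply (Rmult_eq_reg_r (g 0%nat)); [| lra]. rewrite E0.
  replace (f x * (g 1%nat * a2 0%nat / (g 0%nat * a2 1%nat)) * (a1 (S x) / a1 x) * g 0%nat)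
    with (f x * g 1%nat * a2 0%nat * a1 (S x) / (a2 1%nat * a1 x)) by (field; lra).
  rewrite E1. field. lra.
Qed.

Lemma first_ratio_sym : first_ratio f a1 = first_ratio g a2.
Proof.
  pose proof (product_form 1 1 (le_n _)) as E0.
  pose proof (product_form 1 0 (Nat.le_0_l _)) as E1.
  simpl in E0, E1. unfold first_ratio.
  pose proof (f_pos 0%nat). pose proof (g_pos 0%nat).
  pose proof (a1_pos 1%nat). pose proof (a2_pos 1%nat).
  apply (Rmult_eq_reg_r (f 0%nat * a1 1%nat * g 0%nat * a2 1%nat));
    [| repeat apply Rmult_integral_contrapositive_currified; lra].
  replace (f 1%nat * a1 0%nat / (f 0%nat * a1 1%nat) * (f 0%nat * a1 1%nat * g 0%nat * a2 1%nat))
    with (f 1%nat * g 0%nat * a1 0%nat * a2 1%nat) by (field; lra).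
  replace (g 1%nat * a2 0%nat / (g 0%nat * a2 1%nat) * (f 0%nat * a1 1%nat * g 0%nat * a2 1%nat))
    with (f 0%nat * g 1%nat * a2 0%nat * a1 1%nat) by (field; lra).
  rewrite E0, E1. ring.
Qed.

End ProductForm.

Lemma cond_law_product_geometric (f g a1 a2 : nat -> R) :
  (forall x, 0 < f x) -> (forall y, 0 < g y) ->
  (forall x, 0 < a1 x) -> (forall y, 0 < a2 y) ->
  (forall s k, (k <= s)%nat ->
     cond_prob_given_sum f g s k
     = a1 k * a2 (s - k)%nat / sum_f_R0 (fun j => a1 j * a2 (s - j)%nat) s) ->
  exists p, 0 < p /\
    (forall x, f x = f 0%nat * (a1 x / a1 0%nat) * p ^ x) /\
    (forall y, g y = g 0%nat * (a2 y / a2 0%nat) * p ^ y).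
Proof.
  intros Hf Hg Ha1 Ha2 Hcond.
  set (c := fun s => sum_f_R0 (fun j => f j * g (s - j)%nat) s
                     / sum_f_R0 (fun j => a1 j * a2 (s - j)%nat) s).
  assert (Hprod : forall s k, (k <= s)%nat ->
                    f k * g (s - k)%nat = c s * (a1 k * a2 (s - k)%nat)).
  { intros s k Hks. pose proof (Hcond s k Hks) as E.
    unfold cond_prob_given_sum in E. unfold c.
    assert (0 < sum_f_R0 (fun j => f j * g (s - j)%nat) s)
      by (apply tech1; intros; apply Rmult_lt_0_compat; auto).
    assert (0 < sum_f_R0 (fun j => a1 j * a2 (s - j)%nat) s)
      by (apply tech1; intros; apply Rmult_lt_0_compat; auto).
    apply (Rmult_eq_reg_r (/ sum_f_R0 (fun j => f j * g (s - j)%nat) s));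
      [| apply Rinv_neq_0_compat; lra].
    unfold Rdiv in E. rewrite E. field. lra. }
  exists (first_ratio g a2). repeat split.
  - unfold first_ratio.
    pose proof (Hg 0%nat). pose proof (Hg 1%nat). pose proof (Ha2 0%nat). pose proof (Ha2 1%nat).
    apply Rdiv_lt_0_compat; apply Rmult_lt_0_compat; auto.
  - apply geometric_form; [exact Ha1 |].
    exact (product_form_succ f g a1 a2 c Hg Ha1 Ha2 Hprod).
  - apply geometric_form; [exact Ha2 |].
    rewrite <- (first_ratio_sym f g a1 a2 c Hf Hg Ha1 Ha2 Hprod).
    exact (product_form_succ g f a2 a1 c Hf Ha2 Ha1 (product_form_swap f g a1 a2 c Hprod)).
Qed.

Definition ecomp_factor (nu alpha beta : R) (k : nat) : R :=
  Rpower (Gamma (nu + INR k)) beta / Rpower (INR (fact k)) alpha.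

Lemma ecomp_factor_pos nu alpha beta k : 0 < ecomp_factor nu alpha beta k.
Proof. apply Rdiv_lt_0_compat; apply exp_pos. Qed.

Lemma ecomp_weight_factor nu p alpha beta x :
  ecomp_weight nu p alpha beta x
  = ecomp_factor nu alpha beta x / ecomp_factor nu alpha beta 0 * p ^ x.
Proof.
  unfold ecomp_weight, ecomp_factor. simpl INR. simpl fact. rewrite Rplus_0_r.
  replace (Rpower 1 alpha) with 1 by (unfold Rpower; rewrite ln_1, Rmult_0_r, exp_0; auto).
  assert (0 < Rpower (Gamma nu) beta) by apply exp_pos.
  assert (0 < Rpower (INR (fact x)) alpha) by apply exp_pos.
  field. lra.
Qed.

(* [Rpower] splits over a product only for positive bases, hence [Gamma_pos]. *)
Lemma enhg_weight_factor s nu1 nu2 alpha beta k :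
  0 < nu1 -> 0 < nu2 ->
  enhg_weight s nu1 nu2 alpha beta k
  = ecomp_factor nu1 alpha beta k * ecomp_factor nu2 alpha beta (s - k).
Proof.
  intros Hnu1 Hnu2. unfold enhg_weight, ecomp_factor.
  pose proof (pos_INR k). pose proof (pos_INR (s - k)).
  rewrite <- Rpower_mult_distr by (apply Gamma_pos; lra).
  rewrite <- Rpower_mult_distr by apply INR_fact_lt_0.
  assert (0 < Rpower (INR (fact k)) alpha) by apply exp_pos.
  assert (0 < Rpower (INR (fact (s - k))) alpha) by apply exp_pos.
  field. lra.
Qed.

Theorem theoremB (nu1 nu2 alpha beta : R) (f g : nat -> R) :
  0 < nu1 -> 0 < nu2 -> 0 <= alpha -> 0 <= beta ->
  (* f, g are pmfs on N with full support: f x = P(X=x), g y = P(Y=y) *)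
  (forall x, 0 < f x) -> (forall y, 0 < g y) ->
  is_series f 1 -> is_series g 1 ->
  (* X | X+Y=s ~ ENHG(s,nu1,nu2,alpha,beta) for all s, X and Y independent *)
  (forall s k : nat, (k <= s)%nat ->
     cond_prob_given_sum f g s k = enhg_pmf s nu1 nu2 alpha beta k) ->
  exists p : R, 0 < p /\
    (forall x : nat, f x = f 0%nat * ecomp_weight nu1 p alpha beta x) /\
    (forall y : nat, g y = g 0%nat * ecomp_weight nu2 p alpha beta y).
Proof.
  intros Hnu1 Hnu2 _ _ Hf Hg _ _ Hcond.
  destruct (cond_law_product_geometric f g
              (ecomp_factor nu1 alpha beta) (ecomp_factor nu2 alpha beta))
    as [p [Hp [Hfp Hgp]]]; auto using ecomp_factor_pos.
  { intros s k Hks. rewrite Hcond by exact Hks.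
    unfold enhg_pmf, enhg_norm. rewrite enhg_weight_factor by lra.
    f_equal. apply sum_eq. intros j _. apply enhg_weight_factor; lra. }
  exists p. repeat split; [exact Hp | |]; intro z; rewrite ecomp_weight_factor.
  - rewrite Hfp at 1. unfold Rdiv. ring.
  - rewrite Hgp at 1. unfold Rdiv. ring.
Qed.
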